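(* The boundary set $\partial\Xi=\{\xi\in\Xi:\ \kappa(\xi)>1\}$ is infinite; that is, there are infinitely many $\xi\in\Xi$ which are the fractional part of at least two distinct periodic points of the scaling map $\gamma$.
   Context: Let $\lambda$ be the real root of $x^3+x^2+x-1$, $\omega=\lambda^3=1-\lambda-\lambda^2$. Every $x\in\mathbb{Q}(\lambda)$ is uniquely $x=r_0+r_1\lambda+r_2\lambda^2$ with $r_i\in\mathbb{Q}$; set $\Xi=\{\xi_0+\xi_1\lambda+\xi_2\lambda^2:\ \xi_i\in\mathbb{Q}\cap[0,1)\}$ and $\Pi_f(x)=\{r_0\}+\{r_1\}\lambda+\{r_2\}\lambda^2\in\Xi$ (fractional parts of coordinates). Scaling map: put $N=7$ and the data (for $j=0,\dots,6$): $\tau_0=\lambda+\lambda^2$, $\tau_1=-1+3\lambda$, $\tau_2=\lambda-\lambda^2$, $\tau_3=-1+2\lambda+\lambda^2$, $\tau_4=1-\lambda-\lambda^2$, $\tau_5=\lambda-\lambda^2$, $\tau_6=-\lambda$; $(\nu_0,\dots,\nu_6)=(4,13,12,8,8,12,4)$; path function $p(j,t)$, $0\le t<\nu_j$, is the $(t+1)$-th entry of the list: $j=0$: $(0,6,3,6)$; $j=1$: $(0,6,3,6,1,6,2,5,6,1,6,3,6)$; $j=2$: $(0,6,3,6,1,6,2,5,6,2,4,6)$; $j=3$: $(0,6,3,6,1,6,3,6)$; $j=4$: $(0,6,4,5,6,2,4,6)$; $j=5$: $(0,6,4,5,6,2,5,6,1,6,3,6)$; $j=6$: $(0,6,4,6)$.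 Let $\mathcal{V}$ be the set of sequences $\sigma=((j_1,t_1),(j_2,t_2),\dots)$ with $0\le j_k\le 6$, $0\le t_k<\nu_{j_k}$, $j_k=p(j_{k+1},t_{k+1})$ for all $k\ge1$, and which do not end in any of the tails $(1,9)^\infty,(2,6)^\infty,(3,2)^\infty,(4,6)^\infty,(5,3)^\infty,(6,1)^\infty$. Put $d_i=\sum_{t=0}^{t_i-1}\tau_{p(j_i,t)}$ and $x(\sigma)=\sum_{i\ge1}d_i\omega^{i-1}$; the map $\sigma\mapsto x(\sigma)$ is a bijection $\mathcal{V}\to[0,1)$. The scaling map $\gamma:[0,1)\to[0,1)$ is $\gamma(x)=(x-d_1)\omega^{-1}$, where $d_1$ is the first digit of the code of $x$; it is conjugate to the left shift on $\mathcal{V}$. A periodic point of $\gamma$ is an $x$ with $\gamma^n(x)=x$ for some $n\ge1$. For $\xi\in\Xi$, the multiplicity $\kappa(\xi)$ is the number of periodic points $x$ of $\gamma$ with $\Pi_f(x)=\xi$. *)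

From Stdlib Require Import Reals QArith Qreals List ClassicalEpsilon.
Import ListNotations.
Open Scope R_scope.

(* lam is a parameter of every definition; the theorem assumes
   lam^3 + lam^2 + lam - 1 = 0 (the polynomial has a unique real root). *)

Definition omega (lam : R) : R := lam ^ 3.

Definition tau (lam : R) (j : nat) : R :=
  match j with
  | 0%nat => lam + lam ^ 2
  | 1%nat => -1 + 3 * lam
  | 2%nat => lam - lam ^ 2
  | 3%nat => -1 + 2 * lam + lam ^ 2
  | 4%nat => 1 - lam - lam ^ 2
  | 5%nat => lam - lam ^ 2
  | _ => - lam
  end.

Definition nu (j : nat) : nat :=
  match j with
  | 0%nat => 4 | 1%nat => 13 | 2%nat => 12 | 3%nat => 8
  | 4%nat => 8 | 5%nat => 12 | _ => 4
  end.

Definition plist (j : nat) : list nat :=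
  match j with
  | 0%nat => [0;6;3;6]
  | 1%nat => [0;6;3;6;1;6;2;5;6;1;6;3;6]
  | 2%nat => [0;6;3;6;1;6;2;5;6;2;4;6]
  | 3%nat => [0;6;3;6;1;6;3;6]
  | 4%nat => [0;6;4;5;6;2;4;6]
  | 5%nat => [0;6;4;5;6;2;5;6;1;6;3;6]
  | _ => [0;6;4;6]
  end%nat.

(* path function p(j,t) = (t+1)-th entry of the list for j *)
Definition p (j t : nat) : nat := nth t (plist j) 0%nat.

Definition digit (lam : R) (s : nat * nat) : R :=
  fold_right Rplus 0 (map (fun u => tau lam (p (fst s) u)) (seq 0 (snd s))).

Definition bad_tails : list (nat * nat) :=
  [(1,9); (2,6); (3,2); (4,6); (5,3); (6,1)]%nat.

(* sigma k = (j_{k+1}, t_{k+1}) : sequences are indexed from 0 *)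
Definition valid (sigma : nat -> nat * nat) : Prop :=
  (forall k, (fst (sigma k) <= 6)%nat /\ (snd (sigma k) < nu (fst (sigma k)))%nat) /\
  (forall k, fst (sigma k) = p (fst (sigma (S k))) (snd (sigma (S k)))) /\
  ~ (exists K tl, In tl bad_tails /\ forall k, (K <= k)%nat -> sigma k = tl).

(* x(sigma) = sum_{i>=1} d_i omega^(i-1) = x *)
Definition is_code (lam : R) (sigma : nat -> nat * nat) (x : R) : Prop :=
  valid sigma /\
  infinite_sum (fun i => digit lam (sigma i) * (omega lam) ^ i) x.

(* the code of x (unique for x in [0,1), by the bijection V -> [0,1)) *)
Definition code (lam : R) (x : R) : nat -> nat * nat :=
  epsilon (inhabits (fun _ : nat => (0, 0)%nat)) (fun sigma => is_code lam sigma x).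

Definition gamma (lam : R) (x : R) : R :=
  (x - digit lam (code lam x 0%nat)) / omega lam.

Definition periodic_point (lam : R) (x : R) : Prop :=
  0 <= x < 1 /\ exists n : nat, (1 <= n)%nat /\ Nat.iter n (gamma lam) x = x.

(* Pi_f(x) = xi, where x = r0 + r1 lam + r2 lam^2 with r_i rational
   (coordinates are unique since lam has degree 3 over Q) *)
Definition PiF (lam : R) (x xi : R) : Prop :=
  exists r0 r1 r2 : Q,
    x = Q2R r0 + Q2R r1 * lam + Q2R r2 * lam ^ 2 /\
    xi = frac_part (Q2R r0) + frac_part (Q2R r1) * lam + frac_part (Q2R r2) * lam ^ 2.

Definition in_boundary (lam : R) (xi : R) : Prop :=
  exists x y : R, periodic_point lam x /\ periodic_point lam y /\ x <> y /\
    PiF lam x xi /\ PiF lam y xi.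

From Stdlib Require Import Reals List.
From Stdlib Require Import QArith Qreals Qminmax Lra Lia Nsatz ClassicalEpsilon FunctionalExtensionality FinFun.
Import ListNotations.
Open Scope R_scope.

(* For n >= 1 the periodic codes ((0,2) (0,0)^n (3,0))^oo and ((2,9)^(n+1) (2,6))^oo
   define points x_n = λ^2 / (1 - ω^(n+2)) and y_n = x_n + 1 - 2λ.  Both are periodic
   points of γ: exact interval arithmetic in Q(λ) shows that every point of either orbit
   lies where all admissible first symbols carry the same digit, so that γ acts on the
   orbit as the shift.  For n >= 8 the coordinates of x_n in the basis 1, λ, λ^2 lie in
   [0, 1), because the complex conjugates σ(λ^2) / (1 - σ(ω)^(n+2)) of x_n are tiny
   (|σ(ω)|^2 = 1/ω > 6); as y_n - x_n = 1 - 2λ has integer coordinates, Π_f(x_n) = Π_f(y_n)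
   = x_n.  These values decrease strictly with n. *)

(** * Exact arithmetic in Q(λ) *)

Definition Q3 := (Q * Q * Q)%type.

Definition q3add (s t : Q3) : Q3 :=
  let '(a, b, c) := s in let '(a', b', c') := t in (a + a', b + b', c + c')%Q.
Definition q3sub (s t : Q3) : Q3 :=
  let '(a, b, c) := s in let '(a', b', c') := t in (a - a', b - b', c - c')%Q.
Definition q3scale (k : Q) (t : Q3) : Q3 := let '(a, b, c) := t in (k * a, k * b, k * c)%Q.

(* Product in Q[X]/(X^3 + X^2 + X - 1): X^3 = 1 - X - X^2 and X^4 = -1 + 2X. *)
Definition q3mul (s t : Q3) : Q3 :=
  let '(a0, a1, a2) := s in let '(b0, b1, b2) := t in
  let c3 := (a1 * b2 + a2 * b1)%Q in let c4 := (a2 * b2)%Q in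
  (a0 * b0 + c3 - c4, a0 * b1 + a1 * b0 - c3 + 2 * c4, a0 * b2 + a1 * b1 + a2 * b0 - c3)%Q.

(* Adjugate and norm: [q3mul (q3adj t) t] is [(q3norm t, 0, 0)]. *)
Definition q3adj (t : Q3) : Q3 :=
  let '(a, b, c) := t in
  (2 * c * c - 2 * b * c + b * b - a * c - a * b + a * a,
   2 * c * c - b * c + b * b - a * b,
   c * c - b * c + b * b - a * c)%Q.
Definition q3norm (t : Q3) : Q :=
  let '(a, b, c) := t in
  (c * c * c + b * c * c - b * b * c + b * b * b + 3 * a * c * c - 4 * a * b * c + a * b * b
   - a * a * c - a * a * b + a * a * a)%Q.

Definition q3zero : Q3 := (0, 0, 0)%Q.
Definition q3one : Q3 := (1, 0, 0)%Q.
Definition q3lam2 : Q3 := (0, 0, 1)%Q.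
Definition omegaQ : Q3 := (1, -1, -1)%Q.

Fixpoint omega_powQ (N : nat) : Q3 :=
  match N with O => q3one | S N => q3mul omegaQ (omega_powQ N) end.

Definition lam_lbQ : Q := 5436890126920 # 10000000000000.
Definition lam_ubQ : Q := 5436890126921 # 10000000000000.

(* A rational lower bound for a + b λ + c λ^2 valid for all λ in [lam_lbQ, lam_ubQ]. *)
Definition q3_lower (t : Q3) : Q :=
  let '(a, b, c) := t in
  (a + Qmin (b * lam_lbQ) (b * lam_ubQ) + Qmin (c * (lam_lbQ * lam_lbQ)) (c * (lam_ubQ * lam_ubQ)))%Q.
Definition q3_posb (t : Q3) : bool := negb (Qle_bool (q3_lower t) 0).
Definition q3_zerob (t : Q3) : bool :=
  let '(a, b, c) := t in Qeq_bool a 0 && Qeq_bool b 0 && Qeq_bool c 0.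
Definition q3_nonnegb (t : Q3) : bool := q3_zerob t || q3_posb t.
Definition q3_eqb (s t : Q3) : bool := q3_zerob (q3sub s t).

(** * The graph-directed system *)

Definition tauQ (j : nat) : Q3 :=
  match j with
  | 0%nat => (0, 1, 1)
  | 1%nat => (-1, 3, 0)
  | 2%nat => (0, 1, -1)
  | 3%nat => (-1, 2, 1)
  | 4%nat => (1, -1, -1)
  | 5%nat => (0, 1, -1)
  | _ => (0, -1, 0)
  end%Q.
Definition digitQ (s : nat * nat) : Q3 :=
  fold_right q3add q3zero (map (fun u => tauQ (p (fst s) u)) (seq 0 (snd s))).

(* Endpoints 0 = c_0 < c_1 < ... < c_7 = 1 of the cells [c_j, c_(j+1)] of the
   graph-directed system: every symbol (j,t) maps cell j into cell p(j,t). *)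
Definition cutQ (j : nat) : Q3 :=
  match j with
  | 0%nat => (0, 0, 0)
  | 1%nat => (1, -1, -1)
  | 2%nat => (1, -2, 1)
  | 3%nat => (3 # 2, -2, -1 # 2)
  | 4%nat => (1 # 2, 0, -1 # 2)
  | 5%nat => (-1 # 2, 1, 3 # 2)
  | 6%nat => (0, 1, 0)
  | _ => (1, 0, 0)
  end%Q.

Definition symbols : list (nat * nat) :=
  flat_map (fun j => map (fun t => (j, t)) (seq 0 (nu j))) (seq 0 7).

Definition target (s : nat * nat) : nat := p (fst s) (snd s).

Definition piece_lo (s : nat * nat) : Q3 := q3add (digitQ s) (q3mul omegaQ (cutQ (fst s))).
Definition piece_hi (s : nat * nat) : Q3 := q3add (digitQ s) (q3mul omegaQ (cutQ (S (fst s)))).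

Definition piece_in_cellb (s : nat * nat) : bool :=
  q3_nonnegb (q3sub (piece_lo s) (cutQ (target s))) &&
  q3_nonnegb (q3sub (cutQ (S (target s))) (piece_hi s)).
Definition digit_in_unitb (s : nat * nat) : bool :=
  q3_nonnegb (digitQ s) && q3_posb (q3sub q3one (digitQ s)).
Definition cut_in_unitb (j : nat) : bool := q3_nonnegb (cutQ j) && q3_nonnegb (q3sub q3one (cutQ j)).

Lemma pieces_in_cells : forallb piece_in_cellb symbols = true.
Proof. vm_compute. reflexivity. Qed.
Lemma digits_in_unit : forallb digit_in_unitb symbols = true.
Proof. vm_compute. reflexivity. Qed.

Lemma in_symbols j t : (j <= 6)%nat -> (t < nu j)%nat -> In (j, t) symbols.
Proof.
  intros Hj Ht. apply in_flat_map. exists j. split.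
  - apply in_seq. lia.
  - apply in_map, in_seq. lia.
Qed.

(* True when a point of [lo, hi] (or (lo, hi] if [strict]) can only have a code
   starting with [s] if the digit of [s] is [D]. *)
Definition digit_forcedb (D lo hi : Q3) (strict : bool) (s : nat * nat) : bool :=
  q3_eqb (digitQ s) D
  || (if strict then q3_nonnegb (q3sub lo (piece_hi s)) else q3_posb (q3sub lo (piece_hi s)))
  || q3_posb (q3sub (piece_lo s) hi).

(* Bounds every point of the orbit of [code_y]: its code starts with (2,9), or with (2,6)
   followed by (2,9). *)
Definition y_boundQ : Q3 :=
  q3add (digitQ (2, 6)%nat) (q3mul omegaQ (q3add (digitQ (2, 9)%nat) (q3mul omegaQ (cutQ 3)))).

Lemma forced_x_first : forallb (digit_forcedb (digitQ (0, 2)%nat) q3lam2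
  (q3add q3lam2 (q3mul omegaQ (cutQ 1))) true) symbols = true.
Proof. vm_compute. reflexivity. Qed.
Lemma forced_x_rest : forallb (digit_forcedb q3zero q3zero (q3mul omegaQ (cutQ 4)) false) symbols = true.
Proof. vm_compute. reflexivity. Qed.
Lemma forced_y_body : forallb (digit_forcedb (digitQ (2, 9)%nat)
  (q3add (digitQ (2, 9)%nat) (q3mul omegaQ (cutQ 2)))
  (q3add (digitQ (2, 9)%nat) (q3mul omegaQ y_boundQ)) false) symbols = true.
Proof. vm_compute. reflexivity. Qed.
Lemma forced_y_last : forallb (digit_forcedb (digitQ (2, 6)%nat)
  (q3add (digitQ (2, 6)%nat) (q3mul omegaQ (cutQ 2))) y_boundQ false) symbols = true.
Proof. vm_compute. reflexivity. Qed.

Lemma y_boundQ_ge : q3_nonnegb (q3sub y_boundQ (q3add (digitQ (2, 9)%nat) (q3mul omegaQ (cutQ 3)))) = true.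
Proof. vm_compute. reflexivity. Qed.
Lemma cutQ_2_fixed : q3_eqb (cutQ 2) (q3add (digitQ (2, 9)%nat) (q3mul omegaQ (cutQ 2))) = true.
Proof. vm_compute. reflexivity. Qed.
Lemma cutQ_1_le_4 : q3_nonnegb (q3sub (cutQ 4) (cutQ 1)) = true.
Proof. vm_compute. reflexivity. Qed.
Lemma cutQ_3_lt_1 : q3_posb (q3sub q3one (cutQ 3)) = true.
Proof. vm_compute. reflexivity. Qed.
Lemma cutQ_4_lt_1 : q3_posb (q3sub q3one (cutQ 4)) = true.
Proof. vm_compute. reflexivity. Qed.

(** * Periodic codes *)

Section Periodic.
Variables (A : Type) (sg : nat -> A) (N : nat).
Hypothesis Hper : forall i, sg (i + N)%nat = sg i.

Lemma periodic_add_mul i m : sg (i + m * N)%nat = sg i.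
Proof.
  induction m as [|m IH]; [f_equal; lia|].
  replace (i + S m * N)%nat with (i + m * N + N)%nat by lia. rewrite Hper. exact IH.
Qed.

Lemma periodic_mod k : sg k = sg (k mod N).
Proof.
  rewrite <- (periodic_add_mul (k mod N) (k / N)). f_equal.
  rewrite (Nat.div_mod_eq k N) at 1. lia.
Qed.

Lemma periodic_succ_mod k : sg (S k) = sg (S (k mod N)).
Proof.
  rewrite (periodic_mod (S k)), (periodic_mod (S (k mod N))). f_equal.
  replace (S k) with (k + 1)%nat by lia. replace (S (k mod N)) with (k mod N + 1)%nat by lia.
  symmetry. apply Nat.Div0.add_mod_idemp_l.
Qed.

End Periodic.

Lemma valid_shift sg k : valid sg -> valid (fun i => sg (i + k)%nat).
Proof.
  intros [Hs [Ht Hnt]]. split; [|split].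
  - intro i. apply Hs.
  - intro i. replace (S i + k)%nat with (S (i + k)) by lia. apply Ht.
  - intros [K [tl [Htl HK]]]. apply Hnt. exists (K + k)%nat, tl. split; [exact Htl|].
    intros i Hi. replace i with ((i - k) + k)%nat by lia. apply HK. lia.
Qed.

(* A non-constant periodic sequence cannot end in a constant tail. *)
Lemma valid_periodic (sg : nat -> nat * nat) N : (0 < N)%nat ->
  (forall i, sg (i + N)%nat = sg i) ->
  (forall k, (k < N)%nat -> (fst (sg k) <= 6)%nat /\ (snd (sg k) < nu (fst (sg k)))%nat) ->
  (forall k, (k < N)%nat -> fst (sg k) = target (sg (S k))) ->
  (exists i, sg i <> sg 0%nat) -> valid sg.
Proof.
  intros HN Hper Hrange Htrans [i Hi].
  pose proof (fun k => Nat.mod_upper_bound k N ltac:(lia)) as Hmod.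
  split; [|split].
  - intro k. rewrite (periodic_mod _ sg N Hper k). apply Hrange, Hmod.
  - intro k. rewrite (periodic_mod _ sg N Hper k), (periodic_succ_mod _ sg N Hper k).
    apply Htrans, Hmod.
  - intros [K [tl [_ HK]]]. apply Hi.
    rewrite <- (periodic_add_mul _ sg N Hper i K), <- (periodic_add_mul _ sg N Hper 0 K).
    rewrite !HK by nia. reflexivity.
Qed.

Definition code_x (n k : nat) : nat * nat :=
  let r := (k mod (n + 2))%nat in
  if (r =? 0)%nat then (0, 2)%nat else if (r =? S n)%nat then (3, 0)%nat else (0, 0)%nat.
Definition code_y (n k : nat) : nat * nat :=
  if (k mod (n + 2) =? S n)%nat then (2, 6)%nat else (2, 9)%nat.

Lemma mod_add_period i N : ((i + N) mod N = i mod N)%nat.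
Proof. replace (i + N)%nat with (i + 1 * N)%nat by lia. apply Nat.Div0.mod_add. Qed.

Lemma code_x_period n i : code_x n (i + (n + 2)) = code_x n i.
Proof. unfold code_x. rewrite mod_add_period. reflexivity. Qed.
Lemma code_y_period n i : code_y n (i + (n + 2)) = code_y n i.
Proof. unfold code_y. rewrite mod_add_period. reflexivity. Qed.

Lemma code_x_first n : code_x n 0 = (0, 2)%nat.
Proof. unfold code_x. rewrite Nat.Div0.mod_0_l. reflexivity. Qed.
Lemma code_x_middle n k : (1 <= k <= n)%nat -> code_x n k = (0, 0)%nat.
Proof.
  intro Hk. unfold code_x. rewrite Nat.mod_small by lia.
  destruct (Nat.eqb_spec k 0), (Nat.eqb_spec k (S n)); [lia..|reflexivity].
Qed.
Lemma code_x_last n : code_x n (S n) = (3, 0)%nat.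
Proof. unfold code_x. rewrite Nat.mod_small, Nat.eqb_refl by lia. reflexivity. Qed.
Lemma code_x_cases n k : code_x n k = (0, 2)%nat \/ code_x n k = (3, 0)%nat \/ code_x n k = (0, 0)%nat.
Proof. unfold code_x. destruct (_ =? 0)%nat; [|destruct (_ =? S n)%nat]; auto. Qed.

Lemma code_y_body n k : (k <= n)%nat -> code_y n k = (2, 9)%nat.
Proof.
  intro Hk. unfold code_y. rewrite Nat.mod_small by lia.
  destruct (Nat.eqb_spec k (S n)); [lia|reflexivity].
Qed.
Lemma code_y_last n : code_y n (S n) = (2, 6)%nat.
Proof. unfold code_y. rewrite Nat.mod_small, Nat.eqb_refl by lia. reflexivity. Qed.
Lemma code_y_cases n k : code_y n k = (2, 9)%nat \/ code_y n k = (2, 6)%nat.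
Proof. unfold code_y. destruct (_ =? S n)%nat; auto. Qed.
Lemma code_y_after_last n k : code_y n k = (2, 6)%nat -> code_y n (S k) = (2, 9)%nat.
Proof.
  intro H. rewrite (periodic_mod _ (code_y n) (n + 2) (code_y_period n) k) in H.
  rewrite (periodic_succ_mod _ (code_y n) (n + 2) (code_y_period n) k).
  pose proof (Nat.mod_upper_bound k (n + 2) ltac:(lia)).
  destruct (Nat.eq_dec (k mod (n + 2)) (S n)) as [E|E].
  - rewrite E. replace (S (S n)) with (0 + (n + 2))%nat by lia.
    rewrite code_y_period. apply code_y_body. lia.
  - rewrite code_y_body in H by lia. discriminate.
Qed.

Lemma code_x_valid n : (1 <= n)%nat -> valid (code_x n).
Proof.
  intro Hn. apply (valid_periodic _ (n + 2)); [lia|apply code_x_period| | |].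
  - intros k _. destruct (code_x_cases n k) as [E|[E|E]]; rewrite E; simpl; lia.
  - intros k Hk.
    destruct (Nat.eq_dec k 0) as [->|H0]; [rewrite code_x_first, code_x_middle by lia; reflexivity|].
    destruct (Nat.eq_dec k (S n)) as [->|H1].
    + rewrite code_x_last. replace (S (S n)) with (0 + (n + 2))%nat by lia.
      rewrite code_x_period, code_x_first. reflexivity.
    + rewrite code_x_middle by lia.
      destruct (Nat.eq_dec (S k) (S n)) as [->|H2];
        [rewrite code_x_last|rewrite code_x_middle by lia]; reflexivity.
  - exists 1%nat. rewrite code_x_middle, code_x_first by lia. discriminate.
Qed.

Lemma code_y_valid n : valid (code_y n).
Proof.
  apply (valid_periodic _ (n + 2)); [lia|apply code_y_period| | |].
  - intros k _. destruct (code_y_cases n k) as [E|E]; rewrite E; simpl; lia.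
  - intros k _. destruct (code_y_cases n k) as [E|E]; rewrite E;
      [destruct (code_y_cases n (S k)) as [E'|E']; rewrite E'|rewrite code_y_after_last by exact E];
      reflexivity.
  - exists (S n). rewrite code_y_last, code_y_body by lia. discriminate.
Qed.

Lemma Q2R_int (z : Z) : Q2R (z # 1) = IZR z.
Proof. unfold Q2R; simpl. lra. Qed.

Ltac Q2R_push :=
  repeat (rewrite Q2R_plus || rewrite Q2R_minus || rewrite Q2R_mult || rewrite Q2R_opp
          || rewrite Q2R_int).

Lemma cubic_le (a b : R) : a <= b -> a ^ 3 + a ^ 2 + a <= b ^ 3 + b ^ 2 + b.
Proof.
  intro Hab.
  assert (0 < a ^ 2 + a * b + b ^ 2 + a + b + 1)
    by (pose proof (pow2_ge_0 (a + b + 1)); pose proof (pow2_ge_0 a); pose proof (pow2_ge_0 b); nra).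
  replace (b ^ 3 + b ^ 2 + b) with (a ^ 3 + a ^ 2 + a + (b - a) * (a ^ 2 + a * b + b ^ 2 + a + b + 1)) by ring.
  nra.
Qed.

Lemma approximants (f : nat -> R) (x w : R) : 0 <= w < 1 -> infinite_sum f x ->
  forall eps, 0 < eps -> exists n, w ^ n < eps /\ Rabs (sum_f_R0 f n - x) < eps.
Proof.
  intros Hw Hf eps Heps.
  destruct (pow_lt_1_zero w ltac:(rewrite Rabs_right; lra) eps Heps) as [N1 HN1].
  destruct (Hf eps Heps) as [N2 HN2].
  exists (N1 + N2)%nat. split.
  - specialize (HN1 (N1 + N2)%nat ltac:(lia)).
    rewrite Rabs_right in HN1 by (apply Rle_ge, pow_le; lra). exact HN1.
  - apply HN2. lia.
Qed.

Lemma frac_part_small (r : R) : 0 <= r < 1 -> frac_part r = r.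
Proof. intro Hr. symmetry. apply (Int_part_frac_part_spec r 0 r Hr). simpl. ring. Qed.

Lemma frac_part_IZR_add (z : Z) (r : R) : 0 <= r < 1 -> frac_part (IZR z + r) = r.
Proof. intro Hr. symmetry. apply (Int_part_frac_part_spec _ z r Hr eq_refl). Qed.

Section RealRoot.
Variable lam : R.
Hypothesis Hlam : lam ^ 3 + lam ^ 2 + lam - 1 = 0.

(* nsatz does not reify [^]: powers are expanded first. *)
Ltac lam_nsatz := cbn [pow] in *; nsatz.

Lemma lam_bounds : Q2R lam_lbQ < lam < Q2R lam_ubQ.
Proof.
  assert (Hlb : Q2R (lam_lbQ * lam_lbQ * lam_lbQ + lam_lbQ * lam_lbQ + lam_lbQ) < 1).
  { rewrite <- RMicromega.Q2R_1. apply Qlt_Rlt. vm_compute. reflexivity. }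
  assert (Hub : 1 < Q2R (lam_ubQ * lam_ubQ * lam_ubQ + lam_ubQ * lam_ubQ + lam_ubQ)).
  { rewrite <- RMicromega.Q2R_1. apply Qlt_Rlt. vm_compute. reflexivity. }
  rewrite !Q2R_plus, !Q2R_mult in Hlb, Hub.
  set (lb := Q2R lam_lbQ) in *; set (ub := Q2R lam_ubQ) in *.
  split; apply Rnot_le_lt; intro H; apply cubic_le in H; simpl in *; lra.
Qed.

Lemma lam_approx : 0.5436 < lam < 0.5437.
Proof.
  pose proof lam_bounds as [H1 H2].
  unfold Q2R, lam_lbQ, lam_ubQ in *; simpl in *. lra.
Qed.

Lemma omega_approx : 0.16 < omega lam < 0.161.
Proof. pose proof lam_approx. unfold omega. split; nra. Qed.

Lemma omega_pow_bounds N : (1 <= N)%nat -> 0 < omega lam ^ N <= omega lam.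
Proof.
  intro HN. pose proof omega_approx. split; [apply pow_lt; lra|].
  destruct N as [|N]; [lia|]. simpl.
  pose proof (pow_le (omega lam) N ltac:(lra)).
  destruct N as [|N]; [simpl; lra|].
  pose proof (pow_lt_1_compat (omega lam) (S N) ltac:(lra) ltac:(lia)). nra.
Qed.

Definition q3eval (t : Q3) : R := let '(a, b, c) := t in Q2R a + Q2R b * lam + Q2R c * lam ^ 2.

(* |σ t|^2 for the complex embeddings σ of Q(λ): the norm of the remainder u + vX of
   t0 + t1 X + t2 X^2 modulo (X^3 + X^2 + X - 1) / (X - λ) = X^2 + (1 + λ) X + (λ^2 + λ + 1). *)
Definition conj_norm2 (t0 t1 t2 : R) : R :=
  let u := t0 - t2 * (lam ^ 2 + lam + 1) in
  let v := t1 - t2 * (1 + lam) in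
  u * u - (1 + lam) * u * v + (lam ^ 2 + lam + 1) * v * v.

Definition q3conj2 (t : Q3) : R := let '(a, b, c) := t in conj_norm2 (Q2R a) (Q2R b) (Q2R c).

Lemma conj_norm2_nonneg t0 t1 t2 : 0 <= conj_norm2 t0 t1 t2.
Proof.
  unfold conj_norm2. set (u := t0 - t2 * (lam ^ 2 + lam + 1)). set (v := t1 - t2 * (1 + lam)).
  assert (E : u * u - (1 + lam) * u * v + (lam ^ 2 + lam + 1) * v * v =
    (u - (1 + lam) / 2 * v) ^ 2 + (3 * lam ^ 2 + 2 * lam + 3) / 4 * v ^ 2) by field.
  rewrite E. pose proof (pow2_ge_0 (u - (1 + lam) / 2 * v)). pose proof (pow2_ge_0 v).
  assert (0 < 3 * lam ^ 2 + 2 * lam + 3) by nra. nra.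
Qed.

Lemma q3eval_add s t : q3eval (q3add s t) = q3eval s + q3eval t.
Proof. destruct s as [[a b] c], t as [[a' b'] c']; simpl. Q2R_push. ring. Qed.
Lemma q3eval_sub s t : q3eval (q3sub s t) = q3eval s - q3eval t.
Proof. destruct s as [[a b] c], t as [[a' b'] c']; simpl. Q2R_push. ring. Qed.
Lemma q3eval_scale k t : q3eval (q3scale k t) = Q2R k * q3eval t.
Proof. destruct t as [[a b] c]; simpl. Q2R_push. ring. Qed.
Lemma q3eval_mul s t : q3eval (q3mul s t) = q3eval s * q3eval t.
Proof. destruct s as [[a0 a1] a2], t as [[b0 b1] b2]; simpl. Q2R_push. lam_nsatz. Qed.

Lemma q3conj2_scale k t : q3conj2 (q3scale k t) = Q2R k ^ 2 * q3conj2 t.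
Proof. destruct t as [[a b] c]; unfold q3conj2, conj_norm2; simpl. Q2R_push. ring. Qed.
Lemma q3conj2_mul s t : q3conj2 (q3mul s t) = q3conj2 s * q3conj2 t.
Proof. destruct s as [[a0 a1] a2], t as [[b0 b1] b2]; unfold q3conj2, conj_norm2; simpl. Q2R_push. lam_nsatz. Qed.

Lemma q3eval_adj t : q3eval (q3adj t) = q3conj2 t.
Proof. destruct t as [[a b] c]; unfold q3conj2, conj_norm2; simpl. Q2R_push. lam_nsatz. Qed.
Lemma q3conj2_adj t : q3conj2 (q3adj t) = q3eval t ^ 2 * q3conj2 t.
Proof. destruct t as [[a b] c]; unfold q3conj2, conj_norm2; simpl. Q2R_push. lam_nsatz. Qed.
Lemma Q2R_q3norm t : Q2R (q3norm t) = q3eval t * q3conj2 t.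
Proof. destruct t as [[a b] c]; unfold q3conj2, conj_norm2; simpl. Q2R_push. lam_nsatz. Qed.

Lemma q3eval_one : q3eval q3one = 1.
Proof. simpl. Q2R_push. ring. Qed.

Lemma q3eval_zero : q3eval q3zero = 0.
Proof. simpl. Q2R_push. ring. Qed.

Lemma q3eval_lam2 : q3eval q3lam2 = lam ^ 2.
Proof. simpl. Q2R_push. ring. Qed.

Lemma q3eval_omegaQ : q3eval omegaQ = omega lam.
Proof. unfold omega. simpl. Q2R_push. lam_nsatz. Qed.

Lemma q3eval_digitQ s : q3eval (digitQ s) = digit lam s.
Proof.
  unfold digitQ, digit. induction (seq 0 (snd s)) as [|u l IH]; simpl.
  - Q2R_push. ring.
  - rewrite q3eval_add, IH. f_equal.
    destruct (p (fst s) u) as [|[|[|[|[|[|j]]]]]]; simpl; Q2R_push; ring.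
Qed.

Ltac q3eval_push :=
  repeat (rewrite q3eval_add || rewrite q3eval_sub || rewrite q3eval_mul || rewrite q3eval_digitQ
          || rewrite q3eval_omegaQ || rewrite q3eval_zero || rewrite q3eval_one || rewrite q3eval_lam2).

Lemma q3_lower_le t : Q2R (q3_lower t) <= q3eval t.
Proof.
  destruct t as [[a b] c]. unfold q3_lower, q3eval. rewrite !Q2R_plus.
  pose proof lam_bounds as [L1 L2].
  assert (Hlb : 0 < Q2R lam_lbQ) by (unfold Q2R, lam_lbQ; simpl; lra).
  assert (Hb : Q2R (Qmin (b * lam_lbQ) (b * lam_ubQ)) <= Q2R b * lam).
  { pose proof (Qle_Rle _ _ (Q.le_min_l (b * lam_lbQ) (b * lam_ubQ))).
    pose proof (Qle_Rle _ _ (Q.le_min_r (b * lam_lbQ) (b * lam_ubQ))).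
    rewrite !Q2R_mult in *. destruct (Rle_or_lt 0 (Q2R b)); nra. }
  assert (Hc : Q2R (Qmin (c * (lam_lbQ * lam_lbQ)) (c * (lam_ubQ * lam_ubQ))) <= Q2R c * lam ^ 2).
  { pose proof (Qle_Rle _ _ (Q.le_min_l (c * (lam_lbQ * lam_lbQ)) (c * (lam_ubQ * lam_ubQ)))).
    pose proof (Qle_Rle _ _ (Q.le_min_r (c * (lam_lbQ * lam_lbQ)) (c * (lam_ubQ * lam_ubQ)))).
    rewrite !Q2R_mult in *.
    assert (Q2R lam_lbQ * Q2R lam_lbQ <= lam ^ 2 <= Q2R lam_ubQ * Q2R lam_ubQ) by (split; nra).
    destruct (Rle_or_lt 0 (Q2R c)); nra. }
  lra.
Qed.

Lemma q3_posb_sound t : q3_posb t = true -> 0 < q3eval t.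
Proof.
  unfold q3_posb. intro H. apply negb_true_iff in H.
  apply Rlt_le_trans with (Q2R (q3_lower t)); [|apply q3_lower_le].
  rewrite <- RMicromega.Q2R_0. apply Qlt_Rlt, Qnot_le_lt.
  intro H'. apply Qle_bool_iff in H'. congruence.
Qed.

Lemma q3_zerob_sound t : q3_zerob t = true -> q3eval t = 0.
Proof.
  destruct t as [[a b] c]. simpl. intro H.
  apply andb_true_iff in H as [H Hc]. apply andb_true_iff in H as [Ha Hb].
  apply Qeq_bool_eq, Qeq_eqR in Ha, Hb, Hc.
  rewrite Ha, Hb, Hc, RMicromega.Q2R_0. ring.
Qed.

Lemma q3_nonnegb_sound t : q3_nonnegb t = true -> 0 <= q3eval t.
Proof.
  unfold q3_nonnegb. intro H. apply orb_true_iff in H as [H|H].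
  - rewrite q3_zerob_sound by exact H. lra.
  - apply Rlt_le, q3_posb_sound, H.
Qed.

Lemma q3_eqb_sound s t : q3_eqb s t = true -> q3eval s = q3eval t.
Proof. unfold q3_eqb. intro H. apply q3_zerob_sound in H. rewrite q3eval_sub in H. lra. Qed.

Definition cut (j : nat) : R := q3eval (cutQ j).

Lemma q3eval_piece_lo s : q3eval (piece_lo s) = digit lam s + omega lam * cut (fst s).
Proof. unfold piece_lo. rewrite q3eval_add, q3eval_mul, q3eval_digitQ, q3eval_omegaQ. reflexivity. Qed.

Lemma q3eval_piece_hi s : q3eval (piece_hi s) = digit lam s + omega lam * cut (S (fst s)).
Proof. unfold piece_hi. rewrite q3eval_add, q3eval_mul, q3eval_digitQ, q3eval_omegaQ. reflexivity. Qed.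

Lemma piece_in_cell s : In s symbols ->
  cut (target s) <= digit lam s + omega lam * cut (fst s) /\
  digit lam s + omega lam * cut (S (fst s)) <= cut (S (target s)).
Proof.
  intro Hs. pose proof pieces_in_cells as H. rewrite forallb_forall in H.
  apply H, andb_true_iff in Hs as [H1 H2].
  apply q3_nonnegb_sound in H1, H2. rewrite q3eval_sub in H1, H2.
  rewrite q3eval_piece_lo in H1. rewrite q3eval_piece_hi in H2.
  unfold cut in *. lra.
Qed.

Lemma digit_in_unit s : In s symbols -> 0 <= digit lam s < 1.
Proof.
  intro Hs. pose proof digits_in_unit as H. rewrite forallb_forall in H.
  apply H, andb_true_iff in Hs as [H1 H2].
  apply q3_nonnegb_sound in H1. apply q3_posb_sound in H2.
  rewrite q3eval_sub, q3eval_one in H2. rewrite q3eval_digitQ in H1, H2. lra.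
Qed.

Lemma cut_in_unit j : 0 <= cut j <= 1.
Proof.
  assert (H : forall k, cut_in_unitb k = true -> 0 <= cut k <= 1).
  { intros k Hk. apply andb_true_iff in Hk as [H1 H2].
    apply q3_nonnegb_sound in H1, H2. rewrite q3eval_sub, q3eval_one in H2. unfold cut. lra. }
  apply H. destruct j as [|[|[|[|[|[|[|[|j]]]]]]]]; vm_compute; reflexivity.
Qed.

(** * Codes and the scaling map *)

Definition code_term (sg : nat -> nat * nat) (i : nat) : R := digit lam (sg i) * omega lam ^ i.

Definition admissible (sg : nat -> nat * nat) : Prop :=
  (forall k, In (sg k) symbols) /\ (forall k, fst (sg k) = target (sg (S k))).

Lemma valid_admissible sg : valid sg -> admissible sg.
Proof.
  intros [Hs [Ht _]]. split; [|exact Ht].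
  intro k. destruct (Hs k) as [Hj Hn]. destruct (sg k) as [j t]. apply in_symbols; assumption.
Qed.

Lemma admissible_tail sg : admissible sg -> admissible (fun i => sg (S i)).
Proof. intros [Hs Ht]. split; intro k; [apply Hs|apply Ht]. Qed.

Lemma partial_sum_tail sg n :
  sum_f_R0 (code_term sg) (S n) =
  digit lam (sg 0%nat) + omega lam * sum_f_R0 (code_term (fun i => sg (S i))) n.
Proof.
  induction n as [|n IH].
  - unfold code_term. simpl. ring.
  - rewrite tech5, IH. simpl sum_f_R0. unfold code_term. simpl. ring.
Qed.

Lemma code_sum_tail sg x : infinite_sum (code_term sg) x ->
  infinite_sum (code_term (fun i => sg (S i))) ((x - digit lam (sg 0%nat)) / omega lam).
Proof.
  intros H eps Heps. pose proof omega_approx.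
  destruct (H (eps * omega lam)) as [N HN]; [apply Rmult_lt_0_compat; lra|].
  exists N. intros n Hn. specialize (HN (S n) ltac:(lia)).
  rewrite partial_sum_tail in HN. unfold Rdist in *.
  replace (sum_f_R0 (code_term (fun i => sg (S i))) n - (x - digit lam (sg 0%nat)) / omega lam)
    with ((digit lam (sg 0%nat) + omega lam * sum_f_R0 (code_term (fun i => sg (S i))) n - x)
          / omega lam) by (field; lra).
  unfold Rdiv. rewrite Rabs_mult, Rabs_inv, (Rabs_right (omega lam)) by lra.
  apply Rmult_lt_reg_r with (omega lam); [lra|].
  rewrite Rmult_assoc, Rinv_l, Rmult_1_r by lra. exact HN.
Qed.

Lemma code_sum_exists sg : admissible sg -> exists x, infinite_sum (code_term sg) x.
Proof.
  intros [Hs _]. pose proof omega_approx.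
  destruct (Rseries_CV_comp (code_term sg) (fun n => 1 * omega lam ^ n)) as [x Hx].
  - intro n. pose proof (digit_in_unit _ (Hs n)). pose proof (pow_le (omega lam) n ltac:(lra)).
    unfold code_term. split; [apply Rmult_le_pos|]; nra.
  - exists (/ (1 - omega lam)). apply GP_infinite. rewrite Rabs_right; lra.
  - exists x. exact Hx.
Qed.

Lemma partial_sum_near_cell N : forall sg, admissible sg ->
  cut (target (sg 0%nat)) - omega lam ^ N <= sum_f_R0 (code_term sg) N <=
  cut (S (target (sg 0%nat))) + omega lam ^ N.
Proof.
  pose proof omega_approx.
  induction N as [|N IH]; intros sg Hsg.
  - pose proof (digit_in_unit _ (proj1 Hsg 0%nat)).
    pose proof (cut_in_unit (target (sg 0%nat))). pose proof (cut_in_unit (S (target (sg 0%nat)))).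
    unfold code_term. simpl. lra.
  - rewrite partial_sum_tail.
    specialize (IH _ (admissible_tail sg Hsg)). cbv beta in IH.
    rewrite <- (proj2 Hsg 0%nat) in IH.
    destruct (piece_in_cell _ (proj1 Hsg 0%nat)) as [I1 I2].
    simpl pow. split; nra.
Qed.

Lemma code_sum_in_cell sg x : admissible sg -> infinite_sum (code_term sg) x ->
  cut (target (sg 0%nat)) <= x <= cut (S (target (sg 0%nat))).
Proof.
  intros Hsg Hx. pose proof omega_approx.
  assert (Happ := approximants _ _ (omega lam) ltac:(lra) Hx).
  split; apply Rnot_lt_le; intro Hout.
  - destruct (Happ ((cut (target (sg 0%nat)) - x) / 2) ltac:(lra)) as [n [H1 H2]].
    pose proof (partial_sum_near_cell n sg Hsg). apply Rabs_def2 in H2. lra.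
  - destruct (Happ ((x - cut (S (target (sg 0%nat)))) / 2) ltac:(lra)) as [n [H1 H2]].
    pose proof (partial_sum_near_cell n sg Hsg). apply Rabs_def2 in H2. lra.
Qed.

Lemma code_in_piece sg x : is_code lam sg x ->
  q3eval (piece_lo (sg 0%nat)) <= x <= q3eval (piece_hi (sg 0%nat)).
Proof.
  intros [Hv Hx]. pose proof omega_approx. pose proof (valid_admissible sg Hv) as Hsg.
  pose proof (code_sum_in_cell _ _ (admissible_tail sg Hsg) (code_sum_tail sg x Hx)) as Hcell.
  cbv beta in Hcell. rewrite <- (proj2 Hsg 0%nat) in Hcell.
  rewrite q3eval_piece_lo, q3eval_piece_hi.
  set (y := (x - digit lam (sg 0%nat)) / omega lam) in *.
  replace x with (digit lam (sg 0%nat) + omega lam * y) by (unfold y; field; lra).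
  split; nra.
Qed.

Lemma code_is_code sg x : is_code lam sg x -> is_code lam (code lam x) x.
Proof. intro H. unfold code. apply epsilon_spec. exists sg. exact H. Qed.

Lemma gamma_forced D lo hi (strict : bool) sg x : is_code lam sg x ->
  forallb (digit_forcedb D lo hi strict) symbols = true ->
  (if strict then q3eval lo < x else q3eval lo <= x) -> x <= q3eval hi ->
  gamma lam x = (x - q3eval D) / omega lam.
Proof.
  intros Hc Hforced Hlo Hhi.
  pose proof (code_is_code sg x Hc) as Hc'.
  pose proof (code_in_piece _ _ Hc') as [P1 P2].
  set (s := code lam x 0%nat) in *.
  assert (Hs : In s symbols) by (apply (valid_admissible _ (proj1 Hc'))).
  rewrite forallb_forall in Hforced. specialize (Hforced s Hs).
  unfold digit_forcedb in Hforced. unfold gamma. fold s.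
  apply orb_true_iff in Hforced as [Hforced|Hforced];
    [apply orb_true_iff in Hforced as [Hforced|Hforced]|].
  - apply q3_eqb_sound in Hforced. rewrite q3eval_digitQ in Hforced. rewrite Hforced. reflexivity.
  - exfalso. destruct strict.
    + apply q3_nonnegb_sound in Hforced. rewrite q3eval_sub in Hforced. lra.
    + apply q3_posb_sound in Hforced. rewrite q3eval_sub in Hforced. lra.
  - exfalso. apply q3_posb_sound in Hforced. rewrite q3eval_sub in Hforced. lra.
Qed.

Fixpoint shift_point (sg : nat -> nat * nat) (x : R) (k : nat) : R :=
  match k with
  | O => x
  | S k => (shift_point sg x k - digit lam (sg k)) / omega lam
  end.

Lemma shift_point_succ sg x k :
  shift_point sg x k = digit lam (sg k) + omega lam * shift_point sg x (S k).
Proof. pose proof omega_approx. simpl. field. lra. Qed.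

Lemma shift_point_sum sg x k : infinite_sum (code_term sg) x ->
  infinite_sum (code_term (fun i => sg (i + k)%nat)) (shift_point sg x k).
Proof.
  intro Hx. induction k as [|k IH].
  - simpl. replace (fun i => sg (i + 0)%nat) with sg; [exact Hx|].
    apply functional_extensionality. intro i. rewrite Nat.add_0_r. reflexivity.
  - pose proof (code_sum_tail _ _ IH) as H. simpl in H |- *.
    replace (fun i => sg (i + S k)%nat) with (fun i => sg (S (i + k))); [exact H|].
    apply functional_extensionality. intro i. f_equal. lia.
Qed.

Lemma shift_point_code sg x k : is_code lam sg x ->
  is_code lam (fun i => sg (i + k)%nat) (shift_point sg x k).
Proof. intros [Hv Hx]. split; [apply valid_shift, Hv|apply shift_point_sum, Hx]. Qed.

Lemma shift_point_in_cell sg x k : is_code lam sg x ->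
  cut (target (sg k)) <= shift_point sg x k <= cut (S (target (sg k))).
Proof.
  intro Hc. destruct (shift_point_code sg x k Hc) as [Hv Hx].
  apply (code_sum_in_cell _ _ (valid_admissible _ Hv) Hx).
Qed.

Lemma shift_point_period sg x N : infinite_sum (code_term sg) x ->
  (forall i, sg (i + N)%nat = sg i) -> shift_point sg x N = x.
Proof.
  intros Hx Hper. pose proof (shift_point_sum sg x N Hx) as H.
  replace (fun i => sg (i + N)%nat) with sg in H
    by (apply functional_extensionality; intro i; rewrite Hper; reflexivity).
  eapply uniqueness_sum; eassumption.
Qed.

Lemma iter_gamma_shift_point sg x N :
  (forall k, (k < N)%nat -> gamma lam (shift_point sg x k) = shift_point sg x (S k)) ->
  forall k, (k <= N)%nat -> Nat.iter k (gamma lam) x = shift_point sg x k.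
Proof.
  intros H k. induction k as [|k IH]; intro Hk; [reflexivity|].
  simpl. rewrite IH by lia. apply H. lia.
Qed.

Lemma periodic_point_of_code sg x N : is_code lam sg x -> (1 <= N)%nat ->
  (forall i, sg (i + N)%nat = sg i) ->
  (forall k, (k < N)%nat -> gamma lam (shift_point sg x k) = shift_point sg x (S k)) ->
  x < 1 -> periodic_point lam x.
Proof.
  intros Hc HN Hper Hgamma Hx1. split; [split; [|exact Hx1]|].
  - pose proof (shift_point_in_cell sg x 0 Hc). pose proof (cut_in_unit (target (sg 0%nat))).
    simpl in *. lra.
  - exists N. split; [exact HN|].
    rewrite (iter_gamma_shift_point sg x N Hgamma N) by lia.
    exact (shift_point_period sg x N (proj2 Hc) Hper).
Qed.

(** * The two periodic orbits *)

Lemma cut_1_le_4 : cut 1 <= cut 4.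
Proof. pose proof (q3_nonnegb_sound _ cutQ_1_le_4). rewrite q3eval_sub in H. unfold cut. lra. Qed.
Lemma cut_3_lt_1 : cut 3 < 1.
Proof. pose proof (q3_posb_sound _ cutQ_3_lt_1). rewrite q3eval_sub, q3eval_one in H. unfold cut. lra. Qed.
Lemma cut_4_lt_1 : cut 4 < 1.
Proof. pose proof (q3_posb_sound _ cutQ_4_lt_1). rewrite q3eval_sub, q3eval_one in H. unfold cut. lra. Qed.
Lemma cut_2_fixed : cut 2 = digit lam (2, 9)%nat + omega lam * cut 2.
Proof.
  pose proof (q3_eqb_sound _ _ cutQ_2_fixed) as H.
  rewrite q3eval_add, q3eval_mul, q3eval_digitQ, q3eval_omegaQ in H. exact H.
Qed.

Lemma y_bound_ge : digit lam (2, 9)%nat + omega lam * cut 3 <= q3eval y_boundQ.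
Proof.
  pose proof (q3_nonnegb_sound _ y_boundQ_ge) as H.
  rewrite q3eval_sub, q3eval_add, q3eval_mul, q3eval_digitQ, q3eval_omegaQ in H. unfold cut. lra.
Qed.
Lemma y_bound_eq : q3eval y_boundQ =
  digit lam (2, 6)%nat + omega lam * (digit lam (2, 9)%nat + omega lam * cut 3).
Proof. unfold y_boundQ, cut. q3eval_push. reflexivity. Qed.

Lemma digit_0_2 : digit lam (0, 2)%nat = lam ^ 2.
Proof. unfold digit. simpl. ring. Qed.

Lemma cut_2_value : cut 2 = 1 - 2 * lam + lam ^ 2.
Proof. unfold cut. simpl. Q2R_push. ring. Qed.

Lemma digit_2_6_sub_cut_2 : digit lam (2, 6)%nat - cut 2 = (2 * lam - 1) * omega lam.
Proof. rewrite cut_2_value. unfold digit, omega. simpl. lam_nsatz. Qed.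

Section CodeX.
Variables (n : nat) (x : R).
Hypothesis Hn : (1 <= n)%nat.
Hypothesis Hx : is_code lam (code_x n) x.

Lemma code_x_digit_zero k : (1 <= k <= S n)%nat -> digit lam (code_x n k) = 0.
Proof.
  intro Hk. destruct (Nat.eq_dec k (S n)) as [->|Hk'].
  - rewrite code_x_last. reflexivity.
  - rewrite code_x_middle by lia. reflexivity.
Qed.

Lemma code_x_shift_point k : (1 <= k <= n + 2)%nat ->
  shift_point (code_x n) x k * omega lam ^ k = x - lam ^ 2.
Proof.
  pose proof omega_approx.
  induction k as [|k IH]; intro Hk; [lia|].
  simpl shift_point. change (omega lam ^ S k) with (omega lam * omega lam ^ k).
  destruct (Nat.eq_dec k 0) as [->|Hk0].
  - rewrite code_x_first, digit_0_2. simpl. field. lra.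
  - rewrite code_x_digit_zero, <- IH by lia. field. lra.
Qed.

Lemma code_x_value : x * (1 - omega lam ^ (n + 2)) = lam ^ 2.
Proof.
  pose proof (code_x_shift_point (n + 2) ltac:(lia)) as H.
  rewrite (shift_point_period _ _ _ (proj2 Hx) (code_x_period n)) in H. lra.
Qed.

Lemma code_x_above : lam ^ 2 < x.
Proof.
  pose proof omega_approx. pose proof lam_approx. pose proof code_x_value as Hv.
  assert (Hpow : 0 < omega lam ^ (n + 2) < 1)
    by (split; [apply pow_lt; lra|apply pow_lt_1_compat; [lra|lia]]).
  assert (Hx0 : 0 < x).
  { apply Rnot_le_lt. intro Hle. assert (x * (1 - omega lam ^ (n + 2)) <= 0) by nra. nra. }
  assert (0 < x * omega lam ^ (n + 2)) by (apply Rmult_lt_0_compat; lra). nra.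
Qed.

Lemma code_x_gamma k : (k < n + 2)%nat ->
  gamma lam (shift_point (code_x n) x k) = shift_point (code_x n) x (S k).
Proof.
  intro Hk. pose proof omega_approx.
  pose proof (shift_point_code _ _ k Hx) as Hck.
  pose proof (shift_point_succ (code_x n) x k) as Hsucc.
  pose proof (shift_point_in_cell _ _ (S k) Hx) as [B1 B2].
  pose proof (cut_in_unit (target (code_x n (S k)))).
  set (y := shift_point (code_x n) x (S k)) in *. clearbody y.
  destruct (Nat.eq_dec k 0) as [->|Hk0].
  - change (shift_point (code_x n) x 0) with x in *.
    rewrite code_x_first, digit_0_2 in Hsucc.
    rewrite code_x_middle in B2 by lia. cbn [target p plist nth fst snd] in B2.
    pose proof code_x_above.
    rewrite (gamma_forced _ _ _ true _ _ Hck forced_x_first); q3eval_push; rewrite ?digit_0_2.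
    + rewrite Hsucc. field. lra.
    + lra.
    + rewrite Hsucc. unfold cut in B2. nra.
  - rewrite code_x_digit_zero, Rplus_0_l in Hsucc by lia.
    assert (Hnext : y <= cut 4).
    { pose proof cut_1_le_4.
      destruct (code_x_cases n (S k)) as [E|[E|E]]; rewrite E in B2;
        cbn [target p plist nth fst snd] in B2; lra. }
    rewrite (gamma_forced _ _ _ false _ _ Hck forced_x_rest); q3eval_push; rewrite Hsucc.
    + field. lra.
    + apply Rmult_le_pos; lra.
    + unfold cut in Hnext. apply Rmult_le_compat_l; lra.
Qed.

Lemma code_x_periodic : periodic_point lam x.
Proof.
  apply (periodic_point_of_code _ _ (n + 2) Hx ltac:(lia) (code_x_period n) code_x_gamma).
  pose proof (shift_point_in_cell _ _ 0 Hx) as [_ B]. pose proof cut_4_lt_1.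
  rewrite code_x_first in B. cbn [target p plist nth fst snd shift_point] in B. lra.
Qed.

End CodeX.

Section CodeY.
Variables (n : nat) (y : R).
Hypothesis Hy : is_code lam (code_y n) y.

Lemma code_y_in_cells k : cut 2 <= shift_point (code_y n) y k <= cut 3.
Proof.
  pose proof (shift_point_in_cell _ _ k Hy) as H.
  destruct (code_y_cases n k) as [E|E]; rewrite E in H; exact H.
Qed.

Lemma code_y_below k : shift_point (code_y n) y k <= q3eval y_boundQ.
Proof.
  pose proof omega_approx. pose proof y_bound_ge. rewrite y_bound_eq in *.
  pose proof (shift_point_succ (code_y n) y k) as Hk.
  pose proof (code_y_in_cells (S k)) as [_ H1].
  destruct (code_y_cases n k) as [E|E]; rewrite E in Hk; rewrite Hk.
  - assert (omega lam * shift_point (code_y n) y (S k) <= omega lam * cut 3)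
      by (apply Rmult_le_compat_l; lra). lra.
  - pose proof (shift_point_succ (code_y n) y (S k)) as Hk1.
    rewrite (code_y_after_last n k E) in Hk1.
    pose proof (code_y_in_cells (S (S k))) as [_ H2].
    rewrite Hk1. apply Rplus_le_compat_l, Rmult_le_compat_l; [lra|].
    apply Rplus_le_compat_l, Rmult_le_compat_l; lra.
Qed.

Lemma code_y_gamma k :
  gamma lam (shift_point (code_y n) y k) = shift_point (code_y n) y (S k).
Proof.
  pose proof omega_approx.
  pose proof (shift_point_code _ _ k Hy) as Hck.
  pose proof (shift_point_succ (code_y n) y k) as Hsucc.
  pose proof (code_y_in_cells (S k)) as [H1 _]. pose proof (code_y_below (S k)) as H2.
  pose proof (code_y_below k) as H3.
  set (z := shift_point (code_y n) y (S k)) in *. clearbody z.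
  destruct (code_y_cases n k) as [E|E]; rewrite E in Hsucc.
  - rewrite (gamma_forced _ _ _ false _ _ Hck forced_y_body); q3eval_push; rewrite Hsucc.
    + field. lra.
    + unfold cut in H1. apply Rplus_le_compat_l, Rmult_le_compat_l; lra.
    + apply Rplus_le_compat_l, Rmult_le_compat_l; lra.
  - rewrite (gamma_forced _ _ _ false _ _ Hck forced_y_last); q3eval_push.
    + rewrite Hsucc. field. lra.
    + rewrite Hsucc. unfold cut in H1. apply Rplus_le_compat_l, Rmult_le_compat_l; lra.
    + exact H3.
Qed.

Lemma code_y_periodic : periodic_point lam y.
Proof.
  apply (periodic_point_of_code _ _ (n + 2) Hy ltac:(lia) (code_y_period n) (fun k _ => code_y_gamma k)).
  pose proof (code_y_in_cells 0) as [_ B]. pose proof cut_3_lt_1. simpl in B. lra.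
Qed.

Lemma code_y_shift_point k : (k <= S n)%nat ->
  (shift_point (code_y n) y k - cut 2) * omega lam ^ k = y - cut 2.
Proof.
  pose proof omega_approx. pose proof cut_2_fixed as Hfix.
  induction k as [|k IH]; intro Hk; [simpl; ring|].
  rewrite <- IH by lia. simpl shift_point.
  change (omega lam ^ S k) with (omega lam * omega lam ^ k).
  rewrite code_y_body by lia.
  set (c := cut 2) in *. set (d := digit lam (2, 9)%nat) in *.
  replace ((shift_point (code_y n) y k - d) / omega lam - c) with
    ((shift_point (code_y n) y k - (d + omega lam * c)) / omega lam) by (field; lra).
  rewrite <- Hfix. field. lra.
Qed.

Lemma code_y_value : y * (1 - omega lam ^ (n + 2)) =
  cut 2 + omega lam ^ S n * (digit lam (2, 6)%nat - cut 2).
Proof.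
  pose proof (code_y_shift_point (S n) ltac:(lia)) as H.
  pose proof (shift_point_succ (code_y n) y (S n)) as Hlast.
  rewrite code_y_last in Hlast. replace (S (S n)) with (n + 2)%nat in Hlast by lia.
  rewrite (shift_point_period _ _ _ (proj2 Hy) (code_y_period n)) in Hlast.
  replace (n + 2)%nat with (S (S n)) by lia.
  change (omega lam ^ S (S n)) with (omega lam * omega lam ^ S n).
  rewrite Hlast in H. lra.
Qed.

End CodeY.

Lemma code_exists sg : valid sg -> exists x, is_code lam sg x.
Proof.
  intro Hv. destruct (code_sum_exists sg (valid_admissible sg Hv)) as [x Hx].
  exists x. split; assumption.
Qed.

Definition boundary_point (n : nat) : R := lam ^ 2 / (1 - omega lam ^ (n + 2)).

Lemma code_x_point n x : (1 <= n)%nat -> is_code lam (code_x n) x -> x = boundary_point n.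
Proof.
  intros Hn Hx. pose proof (omega_pow_bounds (n + 2) ltac:(lia)). pose proof omega_approx.
  pose proof (code_x_value n x Hn Hx). unfold boundary_point. field_simplify_eq; lra.
Qed.

Lemma code_y_point n x y : (1 <= n)%nat ->
  is_code lam (code_x n) x -> is_code lam (code_y n) y -> y = x + 1 - 2 * lam.
Proof.
  intros Hn Hx Hy. pose proof omega_approx. pose proof (omega_pow_bounds (n + 2) ltac:(lia)).
  pose proof (code_x_value n x Hn Hx) as Hvx. pose proof (code_y_value n y Hy) as Hvy.
  pose proof cut_2_value as Hcut2. pose proof digit_2_6_sub_cut_2 as Hdiff.
  replace (n + 2)%nat with (S (S n)) in * by lia.
  change (omega lam ^ S (S n)) with (omega lam * omega lam ^ S n) in *.
  apply (Rmult_eq_reg_r (1 - omega lam * omega lam ^ S n)); [|lra].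
  replace ((x + 1 - 2 * lam) * (1 - omega lam * omega lam ^ S n))
    with (x * (1 - omega lam * omega lam ^ S n) + (1 - 2 * lam) * (1 - omega lam * omega lam ^ S n))
    by ring.
  rewrite Hvy, Hvx, Hdiff, Hcut2. ring.
Qed.

(** * Coordinates of the boundary points *)

Lemma q3eval_omega_powQ N : q3eval (omega_powQ N) = omega lam ^ N.
Proof.
  induction N as [|N IH]; cbn [omega_powQ].
  - apply q3eval_one.
  - rewrite q3eval_mul, q3eval_omegaQ, IH. reflexivity.
Qed.

Lemma q3conj2_omega_powQ N : q3conj2 (omega_powQ N) = q3conj2 omegaQ ^ N.
Proof.
  induction N as [|N IH]; cbn [omega_powQ].
  - unfold q3conj2, conj_norm2. simpl. Q2R_push. ring.
  - rewrite q3conj2_mul, IH. reflexivity.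
Qed.

(* ω has norm 1, so |σ ω|^2 = 1/ω > 6. *)
Lemma q3conj2_omegaQ_ge : 6 <= q3conj2 omegaQ.
Proof.
  pose proof omega_approx.
  assert (Hnorm : q3conj2 omegaQ * omega lam = 1).
  { rewrite <- q3eval_omegaQ, Rmult_comm, <- Q2R_q3norm, <- RMicromega.Q2R_1.
    apply Qeq_eqR. vm_compute. reflexivity. }
  nra.
Qed.

Lemma q3conj2_nonneg t : 0 <= q3conj2 t.
Proof.
  destruct t as [[a b] c]. unfold q3conj2. apply conj_norm2_nonneg.
Qed.

Lemma q3conj2_one_sub W : q3conj2 W / 2 - 1 <= q3conj2 (q3sub q3one W).
Proof.
  pose proof (q3conj2_nonneg (q3sub (2, 0, 0)%Q W)).
  assert (E : q3conj2 (q3sub (2, 0, 0)%Q W) = 2 * q3conj2 (q3sub q3one W) + 2 - q3conj2 W).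
  { destruct W as [[a b] c]. unfold q3conj2, conj_norm2. simpl. Q2R_push. ring. }
  lra.
Qed.

(* The quotient is S adj(P) / N(P). *)
Lemma q3_quotient (P S : Q3) : 0 < q3eval P -> 0 < q3conj2 P ->
  exists T, q3eval T * q3eval P = q3eval S /\ q3conj2 T * q3conj2 P = q3conj2 S.
Proof.
  intros HP1 HP2.
  assert (Hn : Q2R (q3norm P) = q3eval P * q3conj2 P) by apply Q2R_q3norm.
  assert (Hn0 : ~ (q3norm P == 0)%Q).
  { intro E. apply Qeq_eqR in E. rewrite Hn, RMicromega.Q2R_0 in E. nra. }
  exists (q3scale (/ q3norm P) (q3mul S (q3adj P))).
  rewrite q3eval_scale, q3eval_mul, q3eval_adj, q3conj2_scale, q3conj2_mul, q3conj2_adj, Q2R_inv, Hn by exact Hn0.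
  split; field; lra.
Qed.

Lemma coords_of_small_conjugates (t0 t1 t2 : R) :
  0.2955 <= t0 + t1 * lam + t2 * lam ^ 2 <= 0.357 -> conj_norm2 t0 t1 t2 <= 0.0000002 ->
  (0 <= t0 < 1) /\ (0 <= t1 < 1) /\ (0 <= t2 < 1).
Proof.
  intros Hx Hq. pose proof lam_approx. unfold conj_norm2 in Hq.
  set (u := t0 - t2 * (lam ^ 2 + lam + 1)) in *. set (v := t1 - t2 * (1 + lam)) in *.
  assert (Hsq : forall a, a ^ 2 <= 0.0000004 -> -0.001 < a < 0.001) by (intros; split; nra).
  assert (Hv : -0.001 < v < 0.001).
  { apply Hsq. pose proof (pow2_ge_0 (u - (1 + lam) / 2 * v)).
    assert (u * u - (1 + lam) * u * v + (lam ^ 2 + lam + 1) * v * v =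
      (u - (1 + lam) / 2 * v) ^ 2 + (3 * lam ^ 2 + 2 * lam + 3) / 4 * v ^ 2) by field.
    pose proof (pow2_ge_0 v). nra. }
  assert (Hu : -0.001 < u < 0.001).
  { apply Hsq. pose proof (pow2_ge_0 ((lam ^ 2 + lam + 1) * v - (1 + lam) / 2 * u)).
    assert ((lam ^ 2 + lam + 1) * (u * u - (1 + lam) * u * v + (lam ^ 2 + lam + 1) * v * v) =
      ((lam ^ 2 + lam + 1) * v - (1 + lam) / 2 * u) ^ 2 + (3 * lam ^ 2 + 2 * lam + 3) / 4 * u ^ 2)
      by field.
    pose proof (pow2_ge_0 u). nra. }
  assert (E2 : t2 * (3 * lam ^ 2 + 2 * lam + 1) = t0 + t1 * lam + t2 * lam ^ 2 - u - v * lam)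
    by (unfold u, v; ring).
  assert (Ht2 : 0.09 < t2 < 0.13) by (split; nra).
  assert (t1 = v + t2 * (1 + lam)) by (unfold v; ring).
  assert (t0 = u + t2 * (lam ^ 2 + lam + 1)) by (unfold u; ring).
  split; [|split]; split; nra.
Qed.

Lemma boundary_point_coords n : (8 <= n)%nat ->
  exists a b c : Q, boundary_point n = Q2R a + Q2R b * lam + Q2R c * lam ^ 2 /\
    (0 <= Q2R a < 1) /\ (0 <= Q2R b < 1) /\ (0 <= Q2R c < 1).
Proof.
  intro Hn. pose proof omega_approx. pose proof lam_approx.
  pose proof (omega_pow_bounds (n + 2) ltac:(lia)) as Hpow.
  set (W := omega_powQ (n + 2)). set (P := q3sub q3one W).
  assert (HevP : q3eval P = 1 - omega lam ^ (n + 2))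
    by (unfold P, W; rewrite q3eval_sub, q3eval_one, q3eval_omega_powQ; reflexivity).
  assert (HhfW : 60466176 <= q3conj2 W).
  { unfold W. rewrite q3conj2_omega_powQ.
    apply Rle_trans with (6 ^ (n + 2)).
    - apply Rle_trans with (6 ^ 10); [simpl; lra|apply Rle_pow; [lra|lia]].
    - apply pow_incr. pose proof q3conj2_omegaQ_ge. lra. }
  assert (HhfP : 30000000 <= q3conj2 P) by (pose proof (q3conj2_one_sub W); unfold P; lra).
  destruct (q3_quotient P q3lam2 ltac:(lra) ltac:(lra)) as [[[a b] c] [HT1 HT2]].
  assert (Hlam2 : q3conj2 q3lam2 <= 4).
  { unfold q3conj2, conj_norm2. simpl. Q2R_push. nra. }
  exists a, b, c.
  assert (Hx : boundary_point n = Q2R a + Q2R b * lam + Q2R c * lam ^ 2).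
  { unfold boundary_point. rewrite q3eval_lam2, HevP in HT1.
    change (q3eval (a, b, c)) with (Q2R a + Q2R b * lam + Q2R c * lam ^ 2) in HT1.
    rewrite <- HT1 at 1. field. lra. }
  split; [exact Hx|].
  apply coords_of_small_conjugates.
  - rewrite <- Hx.
    assert (boundary_point n * (1 - omega lam ^ (n + 2)) = lam ^ 2)
      by (unfold boundary_point; field; lra).
    split; nra.
  - pose proof (q3conj2_nonneg (a, b, c)). unfold q3conj2 in *. nra.
Qed.

Lemma boundary_point_in_boundary n : (8 <= n)%nat -> in_boundary lam (boundary_point n).
Proof.
  intro Hn. pose proof lam_approx.
  destruct (code_exists (code_x n) (code_x_valid n ltac:(lia))) as [x Hx].
  destruct (code_exists (code_y n) (code_y_valid n)) as [y Hy].
  pose proof (code_x_point n x ltac:(lia) Hx) as Ex.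
  pose proof (code_y_point n x y ltac:(lia) Hx Hy) as Ey.
  destruct (boundary_point_coords n Hn) as [a [b [c [Habc [Ha [Hb Hc]]]]]].
  exists x, y. split; [|split; [|split; [|split]]].
  - exact (code_x_periodic n x ltac:(lia) Hx).
  - exact (code_y_periodic n y Hy).
  - lra.
  - exists a, b, c. rewrite Ex, !frac_part_small by assumption. split; exact Habc.
  - exists (a + 1)%Q, (b + -2)%Q, c.
    rewrite !Q2R_plus, RMicromega.Q2R_1, Q2R_int, (Rplus_comm _ 1), (Rplus_comm _ (-2)).
    rewrite frac_part_IZR_add with (z := 1%Z) by assumption.
    rewrite frac_part_IZR_add with (z := (-2)%Z) by assumption.
    rewrite frac_part_small by assumption.
    split; [rewrite Ey, Ex, Habc; simpl; ring|exact Habc].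
Qed.

Lemma boundary_point_decreasing m n : (m < n)%nat -> boundary_point n < boundary_point m.
Proof.
  intro Hmn. pose proof omega_approx. pose proof lam_approx.
  pose proof (omega_pow_bounds (m + 2) ltac:(lia)) as Hm.
  assert (Hlt : omega lam ^ (n + 2) < omega lam ^ (m + 2)).
  { replace (n + 2)%nat with ((n - m) + (m + 2))%nat by lia. rewrite pow_add.
    pose proof (pow_lt_1_compat (omega lam) (n - m) ltac:(lra) ltac:(lia)). nra. }
  pose proof (omega_pow_bounds (n + 2) ltac:(lia)).
  unfold boundary_point. apply Rmult_lt_compat_l; [nra|].
  apply Rinv_lt_contravar; nra.
Qed.

End RealRoot.

Theorem proposition1 (lam : R) (Hlam : lam ^ 3 + lam ^ 2 + lam - 1 = 0) :
  ~ (exists l : list R, forall xi : R, in_boundary lam xi -> In xi l).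
Proof.
  intros [l Hl].
  set (pts := map (fun i => boundary_point lam (i + 8)) (seq 0 (S (length l)))).
  assert (Hnodup : NoDup pts).
  { apply Injective_map_NoDup; [|apply seq_NoDup].
    intros i j E. destruct (Nat.lt_trichotomy i j) as [H|[H|H]]; [exfalso|exact H|exfalso].
    - pose proof (boundary_point_decreasing lam Hlam (i + 8) (j + 8) ltac:(lia)). lra.
    - pose proof (boundary_point_decreasing lam Hlam (j + 8) (i + 8) ltac:(lia)). lra. }
  assert (Hincl : incl pts l).
  { intros xi Hxi. apply in_map_iff in Hxi as [i [<- _]].
    apply Hl, boundary_point_in_boundary; [exact Hlam|lia]. }
  pose proof (NoDup_incl_length Hnodup Hincl) as Hlen.
  unfold pts in Hlen. rewrite length_map, length_seq in Hlen. lia.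
Qed.
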